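(* Let $V$ be a commutative unital quantale whose underlying lattice is a frame, and suppose moreover that $\otimes=\wedge$ in $V$. For a $V$-group $(Y,b,+)$ the following conditions are equivalent: (i) $(Y,b,+)$ is a protomodular object in $\mathsf{VGrp}$; (ii) $(Y,b,+)$ is a Mal'tsev object in $\mathsf{VGrp}$; (iii) $(Y,b,+)$ is a strongly unital object in $\mathsf{VGrp}$; (iv) $(Y,b)$ is a symmetric $V$-category, i.e. $b(y,y')=b(y',y)$ for all $y,y'\in Y$; (v) $(Y,b,+)$ is an internal group in $\mathsf{VCat}$.
   Context: A commutative unital quantale $V$ is a complete lattice (top $\top$, bottom $\bot$) with a commutative associative operation $\otimes$ with unit $k$ such that $v\otimes\bigvee_i u_i=\bigvee_i(v\otimes u_i)$ for all families (including the empty one). Here $\otimes=\wedge$, so $k=\top$. A $V$-category $(X,a)$ is a set $X$ with a map $a\colon X\times X\to V$ such that $k\le a(x,x)$ and $a(x,x')\otimes a(x',x'')\le a(x,x'')$ for all $x,x',x''$. A $V$-functor $f\colon(X,a)\to(Y,b)$ is a map with $a(x,x')\le b(f(x),f(x'))$; these form the category $\mathsf{VCat}$. A $V$-group $(X,a,+)$ is a $V$-category with a group structure (written additively, not necessarily abelian) such that $a(x_1,x_2)\otimes a(x_1',x_2')\le a(x_1+x_1',x_2+x_2')$ for all elements; $V$-homomorphisms are group homomorphisms that are $V$-functors, forming the category $\mathsf{VGrp}$. Since $k=\top$, $\mathsf{VGrp}$ is pointed (zero object: the one-element group). Limits in $\mathsf{VGrp}$ are computed as in groups, with the initial structure; e.g.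 the product of $(X,a)$ and $(Y,b)$ carries $(a\wedge b)((x,y),(x',y'))=a(x,x')\wedge b(y,y')$, and subgroups (e.g. kernels, pullbacks) carry the restricted structure. An internal group in $\mathsf{VCat}$ is a group object in $\mathsf{VCat}$ with respect to its cartesian product (structure $a\wedge b$), i.e. a $V$-group whose multiplication, inversion and unit are all $V$-functors for the product structures. In a pointed finitely complete category: two morphisms with common codomain are jointly strongly epimorphic if whenever both factor through a monomorphism $m$, then $m$ is an isomorphism. A point over $Y$ is a split epimorphism $f\colon A\to Y$ with a chosen section $s$; it is strong if the kernel $n\colon X\to A$ of $f$ and $s$ are jointly strongly epimorphic, and stably strong if every pullback of it along any morphism $g\colon Z\to Y$ (with the induced section) is strong. An object $Y$ is: a protomodular object if every point over $Y$ is stably strong; a Mal'tsev object if for every pair of points $(f\colon A\to Y,s)$, $(g\colon Z\to Y,t)$ the morphisms $\langle 1_A,tf\rangle\colon A\to A\times_Y Z$ and $\langle sg,1_Z\rangle\colon Z\to A\times_Y Z$ are jointly strongly epimorphic; a strongly unital object if the point $(\pi_2\colon Y\times Y\to Y,\ \langle 1,1\rangle)$ is stably strong. *)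

Set Implicit Arguments.
Unset Strict Implicit.

(** A frame: a complete lattice (arbitrary joins [fsup] of subsets) in which
    binary meets distribute over arbitrary joins.  A commutative unital quantale
    whose underlying lattice is a frame and with tensor = meet (so unit k = top)
    is exactly such a structure: the quantale law [v (x) \/ u_i = \/ (v (x) u_i)]
    is then the frame law [fdistr]. *)
Record frame := Frame {
  fcar :> Type;
  fle : fcar -> fcar -> Prop;
  fle_refl : forall v, fle v v;
  fle_trans : forall u v w, fle u v -> fle v w -> fle u w;
  fle_antisym : forall u v, fle u v -> fle v u -> u = v;
  fsup : (fcar -> Prop) -> fcar;
  fsup_ub : forall (S : fcar -> Prop) v, S v -> fle v (fsup S);
  fsup_least : forall (S : fcar -> Prop) w, (forall v, S v -> fle v w) -> fle (fsup S) w;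
  fmeet : fcar -> fcar -> fcar;
  fmeet_l : forall u v, fle (fmeet u v) u;
  fmeet_r : forall u v, fle (fmeet u v) v;
  fmeet_glb : forall u v w, fle w u -> fle w v -> fle w (fmeet u v);
  ftop : fcar;
  ftop_max : forall v, fle v ftop;
  fdistr : forall v (S : fcar -> Prop),
    fmeet v (fsup S) = fsup (fun w => exists u, S u /\ w = fmeet v u)
}.
Arguments fle {f}. Arguments fmeet {f}. Arguments ftop {f}. Arguments fsup {f}.

Record VGroup (V : frame) := VGroupMk {
  vcar :> Type;
  vadd : vcar -> vcar -> vcar;
  vopp : vcar -> vcar;
  vzero : vcar;
  vaddA : forall x y z, vadd x (vadd y z) = vadd (vadd x y) z;
  vadd0l : forall x, vadd vzero x = x;
  vadd0r : forall x, vadd x vzero = x;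
  vaddNr : forall x, vadd x (vopp x) = vzero;
  vaddNl : forall x, vadd (vopp x) x = vzero;
  vdist : vcar -> vcar -> V;
  vdist_refl : forall x, fle ftop (vdist x x);
  vdist_trans : forall x y z, fle (fmeet (vdist x y) (vdist y z)) (vdist x z);
  vdist_add : forall x1 x2 x1' x2',
    fle (fmeet (vdist x1 x2) (vdist x1' x2')) (vdist (vadd x1 x1') (vadd x2 x2'))
}.
Arguments vadd {V v}. Arguments vopp {V v}. Arguments vzero {V v}. Arguments vdist {V v}.

Record VHom (V : frame) (A B : VGroup V) := VHomMk {
  vhom :> A -> B;
  vhom_add : forall x y, vhom (vadd x y) = vadd (vhom x) (vhom y);
  vhom_le : forall x x', fle (vdist x x') (vdist (vhom x) (vhom x'))
}.

(** Morphisms of VGrp are equal iff their underlying maps are equal;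
    all equalities of morphisms below are stated pointwise. *)
Section VGrpCat.
Variable V : frame.

Definition is_mono (M A : VGroup V) (m : VHom M A) : Prop :=
  forall (W : VGroup V) (u v : VHom W M),
    (forall w, m (u w) = m (v w)) -> forall w, u w = v w.

Definition is_iso (M A : VGroup V) (m : VHom M A) : Prop :=
  exists m' : VHom A M, (forall x, m' (m x) = x) /\ (forall a, m (m' a) = a).

Definition jointly_strongly_epi (X1 X2 A : VGroup V) (f1 : VHom X1 A) (f2 : VHom X2 A) : Prop :=
  forall (M : VGroup V) (m : VHom M A), is_mono m ->
    (exists u1 : VHom X1 M, forall x, m (u1 x) = f1 x) ->
    (exists u2 : VHom X2 M, forall x, m (u2 x) = f2 x) ->
    is_iso m.

Definition is_kernel (A Y K : VGroup V) (f : VHom A Y) (n : VHom K A) : Prop :=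
  (forall k, f (n k) = vzero) /\
  forall (W : VGroup V) (h : VHom W A), (forall w, f (h w) = vzero) ->
    (exists u : VHom W K, forall w, n (u w) = h w) /\
    (forall u1 u2 : VHom W K, (forall w, n (u1 w) = h w) -> (forall w, n (u2 w) = h w) ->
       forall w, u1 w = u2 w).

Definition is_pullback (A Z Y P : VGroup V) (f : VHom A Y) (g : VHom Z Y)
    (p1 : VHom P A) (p2 : VHom P Z) : Prop :=
  (forall p, f (p1 p) = g (p2 p)) /\
  forall (W : VGroup V) (h1 : VHom W A) (h2 : VHom W Z), (forall w, f (h1 w) = g (h2 w)) ->
    (exists u : VHom W P, (forall w, p1 (u w) = h1 w) /\ (forall w, p2 (u w) = h2 w)) /\
    (forall u1 u2 : VHom W P,
       (forall w, p1 (u1 w) = h1 w) -> (forall w, p2 (u1 w) = h2 w) ->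
       (forall w, p1 (u2 w) = h1 w) -> (forall w, p2 (u2 w) = h2 w) ->
       forall w, u1 w = u2 w).

Definition is_product (Y1 Y2 P : VGroup V) (q1 : VHom P Y1) (q2 : VHom P Y2) : Prop :=
  forall (W : VGroup V) (h1 : VHom W Y1) (h2 : VHom W Y2),
    (exists u : VHom W P, (forall w, q1 (u w) = h1 w) /\ (forall w, q2 (u w) = h2 w)) /\
    (forall u1 u2 : VHom W P,
       (forall w, q1 (u1 w) = h1 w) -> (forall w, q2 (u1 w) = h2 w) ->
       (forall w, q1 (u2 w) = h1 w) -> (forall w, q2 (u2 w) = h2 w) ->
       forall w, u1 w = u2 w).

Definition is_point (A Y : VGroup V) (f : VHom A Y) (s : VHom Y A) : Prop :=
  forall y, f (s y) = y.

Definition strong_point (A Y : VGroup V) (f : VHom A Y) (s : VHom Y A) : Prop :=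
  forall (K : VGroup V) (n : VHom K A), is_kernel f n -> jointly_strongly_epi n s.

Definition stably_strong (A Y : VGroup V) (f : VHom A Y) (s : VHom Y A) : Prop :=
  forall (Z : VGroup V) (g : VHom Z Y) (P : VGroup V) (p1 : VHom P A) (p2 : VHom P Z),
    is_pullback f g p1 p2 ->
    forall t : VHom Z P, (forall z, p1 (t z) = s (g z)) -> (forall z, p2 (t z) = z) ->
    strong_point p2 t.

Definition protomodular_object (Y : VGroup V) : Prop :=
  forall (A : VGroup V) (f : VHom A Y) (s : VHom Y A), is_point f s -> stably_strong f s.

Definition maltsev_object (Y : VGroup V) : Prop :=
  forall (A : VGroup V) (f : VHom A Y) (s : VHom Y A)
         (Z : VGroup V) (g : VHom Z Y) (t : VHom Y Z),
    is_point f s -> is_point g t ->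
    forall (P : VGroup V) (p1 : VHom P A) (p2 : VHom P Z), is_pullback f g p1 p2 ->
    forall (al : VHom A P) (be : VHom Z P),
      (forall a, p1 (al a) = a) -> (forall a, p2 (al a) = t (f a)) ->
      (forall z, p1 (be z) = s (g z)) -> (forall z, p2 (be z) = z) ->
      jointly_strongly_epi al be.

Definition strongly_unital_object (Y : VGroup V) : Prop :=
  forall (P : VGroup V) (q1 q2 : VHom P Y), is_product q1 q2 ->
  forall d : VHom Y P, (forall y, q1 (d y) = y) -> (forall y, q2 (d y) = y) ->
  stably_strong q2 d.

Definition symmetric_VCat (Y : VGroup V) : Prop :=
  forall y y' : Y, vdist y y' = vdist y' y.

(** Internal group in VCat: multiplication (Y x Y, b /\ b) -> (Y, b), inversion
    (Y, b) -> (Y, b), and unit from the terminal V-category ({*}, top) are V-functors. *)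
Definition internal_group_VCat (Y : VGroup V) : Prop :=
  (forall y1 y2 y1' y2' : Y,
     fle (fmeet (vdist y1 y2) (vdist y1' y2')) (vdist (vadd y1 y1') (vadd y2 y2'))) /\
  (forall y y' : Y, fle (vdist y y') (vdist (vopp y) (vopp y'))) /\
  (forall u u' : unit, fle (@ftop V) (vdist (@vzero V Y) (@vzero V Y))).

End VGrpCat.

From Stdlib Require Import ProofIrrelevance ZArith Lia.

(* If [b] is symmetric, then for a point [(f, s)] over [Y] pulled back along any [g], the map
   [p ↦ p1 p ⊕ ⊖ s (g (p2 p))] is a V-functor; it yields a V-functorial inverse of every
   monomorphism through which the kernel and the section (or the two Mal'tsev injections)
   factor.  This gives (iv) ⇒ (i), (ii); (i) ⇒ (iii) is immediate, and (iv) ⇔ (v) is the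
   V-functoriality of inversion.

   Conversely, fix [v : Y] and let [D(n, y) := ⋁ { b(x, y) | x a sum of n conjugates of v }].
   Allowing conjugates makes [D] conjugation invariant, so meeting the norm of a V-group with
   [D] (read along homomorphisms to [ℤ] and [Y]) gives a finer V-group on the same group.
   Refine [ℤ × Y] in this way to [Z], pull back the point [π₂ : Y × Y → Y] (or the Mal'tsev
   pair) along [Z → Y] to [P = Y × Z], and refine [P] to [M] by comparing its [Y]-coordinate
   with the count of its [Z]-coordinate.  The identity [M → P] is a monomorphism through which
   the kernel and the section (or the injections) factor, so strong unitality (or the Mal'tsev
   property) makes it invertible; comparing distances from [0] to [(0, (1, v))] in [P] and [M]
   then gives [b(0, v) ≤ b(0, ⊖ v)], which for all [v] is symmetry. *)


Local Notation "a ⊑ b" := (fle a b) (at level 70).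
Local Notation "a ⊓ b" := (fmeet a b) (at level 40, left associativity).
Local Notation "x ⊕ y" := (vadd x y) (at level 50, left associativity).
Local Notation "⊖ x" := (vopp x) (at level 35, x at level 35).

Section FrameFacts.
Context {V : frame}.
Implicit Types a b c d : V.

Lemma fmeet_le_l a b c : a ⊑ c -> a ⊓ b ⊑ c.
Proof. intros; eapply fle_trans; [apply fmeet_l | assumption]. Qed.

Lemma fmeet_le_r a b c : b ⊑ c -> a ⊓ b ⊑ c.
Proof. intros; eapply fle_trans; [apply fmeet_r | assumption]. Qed.

Lemma fmeet_le2 a b c d : a ⊑ c -> b ⊑ d -> a ⊓ b ⊑ c ⊓ d.
Proof. intros; apply fmeet_glb; [apply fmeet_le_l | apply fmeet_le_r]; assumption. Qed.

Lemma fmeetC a b : a ⊓ b = b ⊓ a.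
Proof. apply fle_antisym; apply fmeet_glb; auto using fmeet_l, fmeet_r. Qed.

Lemma fmeetACA a b c d : (a ⊓ b) ⊓ (c ⊓ d) ⊑ (a ⊓ c) ⊓ (b ⊓ d).
Proof. apply fmeet_glb; apply fmeet_le2; auto using fmeet_l, fmeet_r. Qed.

Lemma top_le a b : ftop ⊑ a -> b ⊑ a.
Proof. intros; eapply fle_trans; [apply ftop_max | assumption]. Qed.

Lemma le_fsup (S : V -> Prop) a b : S b -> a ⊑ b -> a ⊑ fsup S.
Proof. intros; eapply fle_trans; [eassumption | apply fsup_ub; assumption]. Qed.

Lemma fsup_meet_le (S T : V -> Prop) c :
  (forall a b, S a -> T b -> a ⊓ b ⊑ c) -> fsup S ⊓ fsup T ⊑ c.
Proof.
  intros H. rewrite fdistr. apply fsup_least. intros r [b [Hb ->]].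
  rewrite fmeetC, fdistr. apply fsup_least. intros r [a [Ha ->]].
  rewrite fmeetC. auto.
Qed.

End FrameFacts.

Section GroupFacts.
Context {V : frame} {G : VGroup V}.
Implicit Types x y z w : G.

Lemma vaddKl x y : ⊖ x ⊕ (x ⊕ y) = y.
Proof. now rewrite vaddA, vaddNl, vadd0l. Qed.

Lemma vaddNKl x y : x ⊕ (⊖ x ⊕ y) = y.
Proof. now rewrite vaddA, vaddNr, vadd0l. Qed.

Lemma vaddK x y : y ⊕ x ⊕ ⊖ x = y.
Proof. now rewrite <- vaddA, vaddNr, vadd0r. Qed.

Lemma vaddNK x y : y ⊕ ⊖ x ⊕ x = y.
Proof. now rewrite <- vaddA, vaddNl, vadd0r. Qed.

Lemma vaddI x y z : x ⊕ y = x ⊕ z -> y = z.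
Proof. intros H. now rewrite <- (vaddKl x y), H, vaddKl. Qed.

Lemma vopp_unique x y : x ⊕ y = vzero -> y = ⊖ x.
Proof. intros H. apply (vaddI x). now rewrite H, vaddNr. Qed.

Lemma vsub_eq0 x y : ⊖ x ⊕ y = vzero -> x = y.
Proof. intros H. now rewrite <- (vaddNKl x y), H, vadd0r. Qed.

Lemma voppK x : ⊖ ⊖ x = x.
Proof. symmetry. apply vopp_unique, vaddNl. Qed.

Lemma voppD x y : ⊖ (x ⊕ y) = ⊖ y ⊕ ⊖ x.
Proof. symmetry. apply vopp_unique. now rewrite vaddA, vaddK, vaddNr. Qed.

Lemma vopp0 : ⊖ vzero = vzero :> G.
Proof. symmetry. apply vopp_unique, vadd0l. Qed.

Definition vnorm x : V := vdist vzero x.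

Lemma vdist_top x (a : V) : a ⊑ vdist x x.
Proof. apply top_le, vdist_refl. Qed.

Lemma vdist_addl y x x' : vdist x x' ⊑ vdist (y ⊕ x) (y ⊕ x').
Proof.
  eapply fle_trans; [| apply vdist_add]. apply fmeet_glb; [apply vdist_top | apply fle_refl].
Qed.

Lemma vdist_addr y x x' : vdist x x' ⊑ vdist (x ⊕ y) (x' ⊕ y).
Proof.
  eapply fle_trans; [| apply vdist_add]. apply fmeet_glb; [apply fle_refl | apply vdist_top].
Qed.

Lemma vdist_conj w x x' : vdist x x' ⊑ vdist (⊖ w ⊕ x ⊕ w) (⊖ w ⊕ x' ⊕ w).
Proof. eapply fle_trans; [apply (vdist_addl (⊖ w)) | apply vdist_addr]. Qed.

Lemma vdistE x y : vdist x y = vnorm (⊖ x ⊕ y).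
Proof.
  apply fle_antisym.
  - eapply fle_trans; [apply (vdist_addl (⊖ x)) |]. rewrite vaddNl. apply fle_refl.
  - eapply fle_trans; [apply (vdist_addl x) |]. rewrite vadd0r, vaddNKl. apply fle_refl.
Qed.

Lemma vdist_opp x x' : vdist x x' ⊑ vdist (⊖ x') (⊖ x).
Proof.
  eapply fle_trans; [apply (vdist_addl (⊖ x')) |].
  eapply fle_trans; [apply (vdist_addr (⊖ x)) |].
  rewrite vaddNl, vadd0l, vaddK. apply fle_refl.
Qed.

Lemma vnorm_add x y : vnorm x ⊓ vnorm y ⊑ vnorm (x ⊕ y).
Proof. unfold vnorm. rewrite <- (vadd0l vzero) at 3. apply vdist_add. Qed.

Lemma vnorm_conj w x : vnorm x ⊑ vnorm (⊖ w ⊕ x ⊕ w).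
Proof.
  unfold vnorm. eapply fle_trans; [apply (vdist_conj w) |].
  rewrite vadd0r, vaddNl. apply fle_refl.
Qed.

End GroupFacts.

Section Constructions.
Context {V : frame}.

Definition is_norm {G : VGroup V} (N : G -> V) : Prop :=
  ftop ⊑ N vzero /\
  (forall x y, N x ⊓ N y ⊑ N (x ⊕ y)) /\
  (forall x w, N x ⊑ N (⊖ w ⊕ x ⊕ w)).

Lemma is_norm_vnorm (G : VGroup V) : is_norm (@vnorm V G).
Proof. repeat split; intros; [apply vdist_refl | apply vnorm_add | apply vnorm_conj]. Qed.

Lemma is_norm_meet {G : VGroup V} {N1 N2 : G -> V} :
  is_norm N1 -> is_norm N2 -> is_norm (fun x => N1 x ⊓ N2 x).
Proof.
  intros [H10 [H1D H1J]] [H20 [H2D H2J]]. repeat split.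
  - apply fmeet_glb; assumption.
  - intros x y. eapply fle_trans; [apply fmeetACA | apply fmeet_le2; auto].
  - intros x w. apply fmeet_le2; auto.
Qed.

Lemma vsubD_conj (G : VGroup V) (x1 x2 x1' x2' : G) :
  ⊖ (x1 ⊕ x1') ⊕ (x2 ⊕ x2') = (⊖ x1' ⊕ (⊖ x1 ⊕ x2) ⊕ x1') ⊕ (⊖ x1' ⊕ x2').
Proof. now rewrite voppD, <- (vaddA _ x1'), vaddNKl, !vaddA. Qed.

(* The distance of [G] is forgotten; by [vdistE] every V-group structure arises this way. *)
Definition normVG {G : VGroup V} {N : G -> V} (HN : is_norm N) : VGroup V.
Proof.
  refine {| vcar := vcar G; vadd := @vadd V G; vopp := @vopp V G; vzero := @vzero V G;
            vdist := fun x y => N (⊖ x ⊕ y) |};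
  destruct HN as [HN0 [HND HNJ]].
  - apply vaddA.
  - apply vadd0l.
  - apply vadd0r.
  - apply vaddNr.
  - apply vaddNl.
  - intros x. now rewrite vaddNl.
  - intros x y z. eapply fle_trans; [apply HND |]. rewrite <- vaddA, vaddNKl. apply fle_refl.
  - intros x1 x2 x1' x2'. rewrite vsubD_conj.
    eapply fle_trans; [| apply HND]. apply fmeet_le2; [apply HNJ | apply fle_refl].
Defined.

Definition prodVG (A B : VGroup V) : VGroup V.
Proof.
  refine {| vcar := (A * B)%type;
            vadd := fun p q => (fst p ⊕ fst q, snd p ⊕ snd q);
            vopp := fun p => (⊖ fst p, ⊖ snd p);
            vzero := (vzero, vzero);
            vdist := fun p q => vdist (fst p) (fst q) ⊓ vdist (snd p) (snd q) |}.
  - intros; simpl; f_equal; apply vaddA.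
  - intros [a b]; simpl; f_equal; apply vadd0l.
  - intros [a b]; simpl; f_equal; apply vadd0r.
  - intros [a b]; simpl; f_equal; apply vaddNr.
  - intros [a b]; simpl; f_equal; apply vaddNl.
  - intros; apply fmeet_glb; apply vdist_refl.
  - intros; simpl. eapply fle_trans; [apply fmeetACA |].
    apply fmeet_le2; apply vdist_trans.
  - intros; simpl. eapply fle_trans; [apply fmeetACA |].
    apply fmeet_le2; apply vdist_add.
Defined.

Definition Zindisc : VGroup V.
Proof.
  refine {| vcar := Z; vadd := Z.add; vopp := Z.opp; vzero := 0%Z;
            vdist := fun _ _ => ftop |};
  intros; try lia; apply ftop_max.
Defined.

Definition idH (A : VGroup V) : VHom A A.
Proof. refine {| vhom := fun x => x |}; [reflexivity | intros; apply fle_refl]. Defined.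

Definition compH {A B C : VGroup V} (g : VHom B C) (f : VHom A B) : VHom A C.
Proof.
  refine {| vhom := fun x => g (f x) |}; intros.
  - now rewrite !vhom_add.
  - eapply fle_trans; apply vhom_le.
Defined.

Definition zeroH (A B : VGroup V) : VHom A B.
Proof.
  refine {| vhom := fun _ => vzero |}; intros; [symmetry; apply vadd0l | apply vdist_top].
Defined.

Definition pairH {W A B : VGroup V} (h1 : VHom W A) (h2 : VHom W B) : VHom W (prodVG A B).
Proof.
  refine {| vhom := fun w => ((h1 w, h2 w) : prodVG A B) |}; intros; simpl.
  - now rewrite !vhom_add.
  - apply fmeet_glb; apply vhom_le.
Defined.

Definition fstH (A B : VGroup V) : VHom (prodVG A B) A.
Proof.
  refine {| vhom := fun p : prodVG A B => fst p |}; intros; [reflexivity | apply fmeet_l].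
Defined.

Definition sndH (A B : VGroup V) : VHom (prodVG A B) B.
Proof.
  refine {| vhom := fun p : prodVG A B => snd p |}; intros; [reflexivity | apply fmeet_r].
Defined.

Lemma prodVG_is_product (A B : VGroup V) : is_product (fstH A B) (sndH A B).
Proof.
  intros W h1 h2. split.
  - exists (pairH h1 h2). split; reflexivity.
  - intros u1 u2 E1 E2 E1' E2' w. simpl in *.
    now rewrite (surjective_pairing (u1 w)), (surjective_pairing (u2 w)), E1, E2, E1', E2'.
Qed.

Lemma vhom0 {A B : VGroup V} (h : VHom A B) : h vzero = vzero.
Proof. apply (vaddI (h vzero)). now rewrite <- vhom_add, !vadd0r. Qed.

Lemma vhomN {A B : VGroup V} (h : VHom A B) (x : A) : h (⊖ x) = ⊖ h x.
Proof. apply vopp_unique. now rewrite <- vhom_add, vaddNr, vhom0. Qed.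

Section Equalizer.
Context {A B : VGroup V} (h1 h2 : VHom A B).

Lemma equalizer_add {x y : A} : h1 x = h2 x -> h1 y = h2 y -> h1 (x ⊕ y) = h2 (x ⊕ y).
Proof. intros Hx Hy. now rewrite !vhom_add, Hx, Hy. Qed.

Lemma equalizer_opp {x : A} : h1 x = h2 x -> h1 (⊖ x) = h2 (⊖ x).
Proof. intros Hx. now rewrite !vhomN, Hx. Qed.

Lemma equalizer_zero : h1 vzero = h2 vzero.
Proof. now rewrite !vhom0. Qed.

Definition eqVG : VGroup V.
Proof.
  refine {| vcar := {x : A | h1 x = h2 x};
            vadd := fun a b => exist _ _ (equalizer_add (proj2_sig a) (proj2_sig b));
            vopp := fun a => exist _ _ (equalizer_opp (proj2_sig a));
            vzero := exist _ _ equalizer_zero;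
            vdist := fun a b => vdist (proj1_sig a) (proj1_sig b) |};
  intros; repeat match goal with a : sig _ |- _ => destruct a end;
  try (apply subset_eq_compat; simpl);
  auto using vaddA, vadd0l, vadd0r, vaddNr, vaddNl, vdist_refl, vdist_trans, vdist_add.
Defined.

Definition eq_inclH : VHom eqVG A.
Proof.
  refine {| vhom := fun a : eqVG => proj1_sig a |}; intros; [reflexivity | apply fle_refl].
Defined.

Definition eq_liftH {W : VGroup V} (h : VHom W A) (Hh : forall w, h1 (h w) = h2 (h w)) :
  VHom W eqVG.
Proof.
  refine {| vhom := fun w => (exist _ (h w) (Hh w) : eqVG) |}; intros.
  - apply subset_eq_compat. apply vhom_add.
  - apply vhom_le.
Defined.

End Equalizer.
End Constructions.

Section Monos.
Context {V : frame}.

Lemma mono_injective {M A : VGroup V} {m : VHom M A} :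
  is_mono m -> forall x y, m x = m y -> x = y.
Proof.
  intros Hm x y Hxy.
  set (K := eqVG m (zeroH M A)).
  assert (Hk : m (⊖ x ⊕ y) = zeroH M A (⊖ x ⊕ y)).
  { simpl. now rewrite vhom_add, vhomN, Hxy, vaddNl. }
  apply vsub_eq0.
  refine (Hm K (eq_inclH _ _) (zeroH K M) _ (exist _ _ Hk)).
  intros [k Hk']. simpl in *. now rewrite Hk', vhom0.
Qed.

Lemma iso_of_vfunctor_section {M A : VGroup V} (m : VHom M A) (r : A -> M) :
  is_mono m -> (forall a, m (r a) = a) -> (forall a a', vdist a a' ⊑ vdist (r a) (r a')) ->
  is_iso m.
Proof.
  intros Hm Hr Hle.
  assert (Hadd : forall a a', r (a ⊕ a') = r a ⊕ r a').
  { intros. apply (mono_injective Hm). now rewrite vhom_add, !Hr. }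
  exists {| vhom := r; vhom_add := Hadd; vhom_le := Hle |}. split; [| exact Hr].
  intros x. apply (mono_injective Hm). simpl. now rewrite Hr.
Qed.

End Monos.

Section Pullbacks.
Context {V : frame} {A Z Y P : VGroup V} (f : VHom A Y) (g : VHom Z Y).
Context (p1 : VHom P A) (p2 : VHom P Z).
Hypothesis Hpb : is_pullback f g p1 p2.

Let C := eqVG (compH f (fstH A Z)) (compH g (sndH A Z)).
Let to_C : VHom P C :=
  eq_liftH (compH f (fstH A Z)) (compH g (sndH A Z)) (pairH p1 p2) (proj1 Hpb).

Lemma pullback_canonical_section : exists u : VHom C P, forall p, u (to_C p) = p.
Proof.
  pose proof (proj2 Hpb) as Hu.
  destruct (Hu C (compH (fstH A Z) (eq_inclH _ _)) (compH (sndH A Z) (eq_inclH _ _))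
              (fun c => proj2_sig c)) as [[u [Hu1 Hu2]] _].
  exists u. intros p.
  destruct (Hu P p1 p2 (proj1 Hpb)) as [_ Huniq].
  apply (Huniq (compH u to_C) (idH P)); intros; simpl; auto.
Qed.

Lemma pullback_jointly_injective q q' : p1 q = p1 q' -> p2 q = p2 q' -> q = q'.
Proof.
  intros E1 E2. destruct pullback_canonical_section as [u Hu].
  rewrite <- (Hu q), <- (Hu q'). f_equal. apply subset_eq_compat. simpl. now rewrite E1, E2.
Qed.

Lemma pullback_vdist q q' : vdist (p1 q) (p1 q') ⊓ vdist (p2 q) (p2 q') ⊑ vdist q q'.
Proof.
  destruct pullback_canonical_section as [u Hu].
  pose proof (vhom_le u (to_C q) (to_C q')) as H. now rewrite !Hu in H.
Qed.

End Pullbacks.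

Section SymmetricObjects.
Context {V : frame} {Y : VGroup V}.

Lemma protomodular_strongly_unital : protomodular_object Y -> strongly_unital_object Y.
Proof. intros H P q1 q2 _ d _ Hd2. exact (H P q2 d Hd2). Qed.

Lemma symmetric_of_vnorm_opp : (forall y : Y, vnorm y ⊑ vnorm (⊖ y)) -> symmetric_VCat Y.
Proof.
  intros H.
  assert (Hle : forall y y' : Y, vdist y y' ⊑ vdist y' y).
  { intros y y'. rewrite !vdistE. eapply fle_trans; [apply H |].
    rewrite voppD, voppK. apply fle_refl. }
  intros y y'. apply fle_antisym; apply Hle.
Qed.

Lemma symmetric_iff_internal_group : symmetric_VCat Y <-> internal_group_VCat Y.
Proof.
  split.
  - intros Hsym. repeat split.
    + apply vdist_add.
    + intros y y'. rewrite Hsym. apply vdist_opp.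
    + intros _ _. apply vdist_refl.
  - intros [_ [Hopp _]] y y'.
    apply fle_antisym; eapply fle_trans; try apply Hopp;
      eapply fle_trans; try apply vdist_opp; rewrite !voppK; apply fle_refl.
Qed.

Hypothesis Hsym : symmetric_VCat Y.

(* Symmetry is used here: [⊖] reverses distances, and [Hsym] turns them back. *)
Lemma vdist_sub_section {A Z P : VGroup V} (f : VHom A Y) (s : VHom Y A) (g : VHom Z Y)
    (p1 : VHom P A) (p2 : VHom P Z) (Hc : forall p, f (p1 p) = g (p2 p)) (q q' : P) :
  vdist q q' ⊑ vdist (p1 q ⊕ ⊖ s (g (p2 q))) (p1 q' ⊕ ⊖ s (g (p2 q'))).
Proof.
  eapply fle_trans; [| apply vdist_add]. apply fmeet_glb; [apply vhom_le |].
  eapply fle_trans; [| apply vdist_opp]. eapply fle_trans; [| apply vhom_le].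
  rewrite Hsym, <- !Hc. eapply fle_trans; apply vhom_le.
Qed.

Lemma symmetric_protomodular : protomodular_object Y.
Proof.
  intros A f s _ Z g P p1 p2 Hpb t Ht1 Ht2 K n [_ Hker] M m Hm [u1 Hu1] [u2 Hu2].
  set (W := eqVG p2 (zeroH P Z)).
  destruct (Hker W (eq_inclH _ _) (fun w => proj2_sig w)) as [[u Hu] _].
  assert (Hw : forall p, p2 (p ⊕ ⊖ t (p2 p)) = zeroH P Z (p ⊕ ⊖ t (p2 p))).
  { intros p. simpl. now rewrite vhom_add, vhomN, Ht2, vaddNr. }
  set (w_of p := exist _ _ (Hw p) : W).
  apply (iso_of_vfunctor_section m (fun p => u1 (u (w_of p)) ⊕ u2 (p2 p)) Hm).
  - intros p. cbv beta. rewrite vhom_add, Hu1, Hu2, Hu. apply vaddNK.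
  - intros p q. eapply fle_trans; [| apply vdist_add]. apply fmeet_glb.
    + eapply fle_trans; [| apply vhom_le]. eapply fle_trans; [| apply vhom_le].
      eapply fle_trans; [| apply (pullback_vdist f g p1 p2 Hpb)]. apply fmeet_glb.
      * simpl. rewrite !vhom_add, !vhomN, !Ht1.
        apply (vdist_sub_section f s g p1 p2 (proj1 Hpb)).
      * simpl. rewrite !Hw. apply vdist_top.
    + eapply fle_trans; apply vhom_le.
Qed.

Lemma symmetric_maltsev : maltsev_object Y.
Proof.
  intros A f s Z g t Hfs _ P p1 p2 Hpb al be Hal1 Hal2 Hbe1 Hbe2 M m Hm [u1 Hu1] [u2 Hu2].
  apply (iso_of_vfunctor_section m (fun p => u1 (p1 p ⊕ ⊖ s (g (p2 p))) ⊕ u2 (p2 p)) Hm).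
  - intros p. cbv beta. rewrite vhom_add, Hu1, Hu2.
    apply (pullback_jointly_injective f g p1 p2 Hpb).
    + rewrite vhom_add, Hal1, Hbe1. apply vaddNK.
    + rewrite vhom_add, Hal2, Hbe2, vhom_add, vhomN, Hfs, (proj1 Hpb), vaddNr, vhom0.
      apply vadd0l.
  - intros p q. eapply fle_trans; [| apply vdist_add]. apply fmeet_glb.
    + eapply fle_trans; [| apply vhom_le]. apply (vdist_sub_section f s g p1 p2 (proj1 Hpb)).
    + eapply fle_trans; apply vhom_le.
Qed.

End SymmetricObjects.

Section ConjugateSums.
Context {V : frame} {Y : VGroup V} (v : Y).

Inductive conj_sum_nat : nat -> Y -> Prop :=
| conj_sum_nat0 : conj_sum_nat 0 vzero
| conj_sum_natS n x w : conj_sum_nat n x -> conj_sum_nat (S n) (x ⊕ (⊖ w ⊕ v ⊕ w)).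

Definition conj_sum (n : Z) (x : Y) : Prop := exists m, n = Z.of_nat m /\ conj_sum_nat m x.

Lemma conj_sum0 : conj_sum 0 vzero.
Proof. exists 0%nat. split; [reflexivity | constructor]. Qed.

Lemma conj_sum1 : conj_sum 1 v.
Proof.
  exists 1%nat. split; [reflexivity |].
  pose proof (conj_sum_natS 0 vzero vzero conj_sum_nat0) as H.
  now rewrite vopp0, !vadd0l, vadd0r in H.
Qed.

Lemma conj_sum_add {n n' x x'} : conj_sum n x -> conj_sum n' x' -> conj_sum (n + n') (x ⊕ x').
Proof.
  intros [m [-> H]] [m' [-> H']]. exists (m + m')%nat. split; [lia |].
  induction H' as [| m' x' w _ IH].
  - now rewrite Nat.add_0_r, vadd0r.
  - rewrite Nat.add_succ_r, vaddA. now constructor.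
Qed.

Lemma conj_sum_conj w {n x} : conj_sum n x -> conj_sum n (⊖ w ⊕ x ⊕ w).
Proof.
  intros [m [-> H]]. exists m. split; [reflexivity |].
  induction H as [| m x w' _ IH].
  - rewrite vadd0r, vaddNl. constructor.
  - replace (⊖ w ⊕ (x ⊕ (⊖ w' ⊕ v ⊕ w')) ⊕ w)
      with (⊖ w ⊕ x ⊕ w ⊕ (⊖ (w' ⊕ w) ⊕ v ⊕ (w' ⊕ w))).
    + now constructor.
    + now rewrite voppD, !vaddA, vaddK.
Qed.

Definition dist_conj_sums (n : Z) (y : Y) : V :=
  fsup (fun r => exists x, conj_sum n x /\ r = vdist x y).

Lemma le_dist_conj_sums {n x y} {a : V} :
  conj_sum n x -> a ⊑ vdist x y -> a ⊑ dist_conj_sums n y.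
Proof. intros Hx Ha. eapply le_fsup; [exists x; split; [exact Hx | reflexivity] | exact Ha]. Qed.

Lemma dist_conj_sums_le n y (a : V) :
  (forall x, conj_sum n x -> vdist x y ⊑ a) -> dist_conj_sums n y ⊑ a.
Proof. intros H. apply fsup_least. intros r [x [Hx ->]]. auto. Qed.

Lemma vdist_le_dist_conj_sums0 (y y' : Y) : vdist y y' ⊑ dist_conj_sums 0 (⊖ y ⊕ y').
Proof. apply (le_dist_conj_sums conj_sum0). rewrite vdistE. apply fle_refl. Qed.

Lemma dist_conj_sums_add n n' y y' :
  dist_conj_sums n y ⊓ dist_conj_sums n' y' ⊑ dist_conj_sums (n + n') (y ⊕ y').
Proof.
  apply fsup_meet_le. intros r r' [x [Hx ->]] [x' [Hx' ->]].
  apply (le_dist_conj_sums (conj_sum_add Hx Hx')). apply vdist_add.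
Qed.

Lemma dist_conj_sums_conj n y w : dist_conj_sums n y ⊑ dist_conj_sums n (⊖ w ⊕ y ⊕ w).
Proof.
  apply dist_conj_sums_le. intros x Hx.
  apply (le_dist_conj_sums (conj_sum_conj w Hx)). apply vdist_conj.
Qed.

Lemma dist_conj_sums1_0 : dist_conj_sums 1 vzero ⊑ vnorm (⊖ v).
Proof.
  apply dist_conj_sums_le. intros x [m [Hm H]].
  assert (m = 1%nat) by lia. subst m.
  inversion H as [| ? x0 w H0]; subst. inversion H0; subst.
  eapply fle_trans; [apply (vdist_conj (⊖ w)) |].
  replace (⊖ ⊖ w ⊕ (vzero ⊕ (⊖ w ⊕ v ⊕ w)) ⊕ ⊖ w) with v
    by now rewrite voppK, vadd0l, !vaddA, vaddNr, vadd0l, vaddK.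
  replace (⊖ ⊖ w ⊕ vzero ⊕ ⊖ w) with (vzero : Y) by now rewrite voppK, vadd0r, vaddNr.
  rewrite vdistE, vadd0r. apply fle_refl.
Qed.

Lemma is_norm_dist_conj_sums {G : VGroup V} (c : VHom G Zindisc) (pr : VHom G Y) :
  is_norm (fun p => dist_conj_sums (c p) (pr p)).
Proof.
  repeat split.
  - rewrite !vhom0. apply (le_dist_conj_sums conj_sum0). apply vdist_refl.
  - intros p q. rewrite !vhom_add. apply dist_conj_sums_add.
  - intros p w. rewrite !vhom_add, !vhomN.
    replace (⊖ c w ⊕ c p ⊕ c w : Z) with (c p) by (simpl; lia).
    apply dist_conj_sums_conj.
Qed.

End ConjugateSums.

Section Refinement.
Context {V : frame} {Y : VGroup V} (v : Y) {G : VGroup V}.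
Context (c : VHom G Zindisc) (pr : VHom G Y).

Definition refineVG : VGroup V :=
  normVG (is_norm_meet (is_norm_vnorm G) (is_norm_dist_conj_sums v c pr)).

Lemma refine_vdistE (p q : refineVG) :
  vdist p q = @vdist V G p q ⊓ dist_conj_sums v (⊖ c p ⊕ c q) (⊖ pr p ⊕ pr q).
Proof. simpl. now rewrite vdistE, !vhom_add, !vhomN. Qed.

Lemma refine_vdist_le (p q : refineVG) :
  vdist p q ⊑ dist_conj_sums v (⊖ c p ⊕ c q) (⊖ pr p ⊕ pr q).
Proof. rewrite refine_vdistE. apply fmeet_r. Qed.

Definition refine_idH : VHom refineVG G.
Proof.
  refine {| vhom := fun p : refineVG => (p : G) |}; intros.
  - reflexivity.
  - rewrite refine_vdistE. apply fmeet_l.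
Defined.

Lemma refine_idH_mono : is_mono refine_idH.
Proof. intros W u u' H w. exact (H w). Qed.

Definition refine_liftH {W : VGroup V} (h : VHom W G)
    (Hh : forall w w', vdist w w' ⊑
            dist_conj_sums v (⊖ c (h w) ⊕ c (h w')) (⊖ pr (h w) ⊕ pr (h w'))) :
  VHom W refineVG.
Proof.
  refine {| vhom := fun w => (h w : refineVG) |}; intros.
  - exact (vhom_add h _ _).
  - rewrite refine_vdistE. apply fmeet_glb; [apply vhom_le | apply Hh].
Defined.

End Refinement.

Section Counterexample.
Context {V : frame} {Y : VGroup V} (v : Y).

Definition cex_Z : VGroup V := refineVG v (fstH Zindisc Y) (sndH Zindisc Y).

Definition cex_count : VHom cex_Z Zindisc.
Proof. refine {| vhom := fun z : cex_Z => fst z |}; intros; [reflexivity | apply ftop_max]. Defined.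

Definition cex_g : VHom cex_Z Y := compH (sndH Zindisc Y) (refine_idH v _ _).

Definition cex_P : VGroup V := prodVG Y cex_Z.

Definition cex_countP : VHom cex_P Zindisc := compH cex_count (sndH Y cex_Z).

Definition cex_M : VGroup V := refineVG v cex_countP (fstH Y cex_Z).

Definition cex_m : VHom cex_M cex_P := refine_idH v _ _.

Lemma vnorm_le_vdist_cex_Z : vnorm v ⊑ vdist (vzero : cex_Z) (1%Z, v).
Proof.
  unfold cex_Z. rewrite refine_vdistE. apply fmeet_glb.
  - apply fmeet_glb; [apply ftop_max | apply fle_refl].
  - apply (le_dist_conj_sums v (conj_sum1 v)). simpl. rewrite vopp0, vadd0l. apply vdist_top.
Qed.

Lemma cex_iso_vnorm_opp : is_iso cex_m -> vnorm v ⊑ vnorm (⊖ v).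
Proof.
  intros [m' [_ Hm']].
  set (p := (vzero, (1%Z, v)) : cex_P).
  assert (E : vdist (vzero : cex_P) p ⊑ vdist (m' vzero) (m' p)) by apply vhom_le.
  rewrite (Hm' vzero : m' vzero = vzero), (Hm' p : m' p = p) in E.
  apply fle_trans with (vdist (vzero : cex_P) p).
  - apply fmeet_glb; [apply vdist_top | apply vnorm_le_vdist_cex_Z].
  - eapply fle_trans; [exact E |]. eapply fle_trans; [apply refine_vdist_le |].
    simpl. rewrite vopp0, vadd0l. apply dist_conj_sums1_0.
Qed.

Definition cex_p1 : VHom cex_P (prodVG Y Y) :=
  pairH (fstH Y cex_Z) (compH cex_g (sndH Y cex_Z)).

Lemma cex_pullback : is_pullback (sndH Y Y) cex_g cex_p1 (sndH Y cex_Z).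
Proof.
  split; [reflexivity |].
  intros W h1 h2 Hh. split.
  - exists (pairH (compH (fstH Y Y) h1) h2). split; [| reflexivity].
    intros w. simpl. rewrite (surjective_pairing (h1 w)). f_equal. symmetry. apply Hh.
  - intros u1 u2 E1 E2 E1' E2' w.
    rewrite (surjective_pairing (u1 w)), (surjective_pairing (u2 w)). f_equal.
    + exact (eq_trans (f_equal fst (E1 w)) (eq_sym (f_equal fst (E1' w)))).
    + exact (eq_trans (E2 w) (eq_sym (E2' w))).
Qed.

Definition cex_kernel : VHom Y cex_P := pairH (idH Y) (zeroH Y cex_Z).

Lemma cex_kernel_is_kernel : is_kernel (sndH Y cex_Z) cex_kernel.
Proof.
  split; [reflexivity |].
  intros W h Hh. split.
  - exists (compH (fstH Y cex_Z) h). intros w. simpl.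
    rewrite (surjective_pairing (h w)). f_equal. symmetry. apply Hh.
  - intros u1 u2 E1 E2 w.
    pose proof (f_equal fst (E1 w)). pose proof (f_equal fst (E2 w)). simpl in *. congruence.
Qed.

Definition cex_t : VHom cex_Z cex_P := pairH cex_g (idH cex_Z).

Definition cex_section : VHom Y cex_Z :=
  refine_liftH v (fstH Zindisc Y) (sndH Zindisc Y) (pairH (zeroH Y Zindisc) (idH Y))
    (vdist_le_dist_conj_sums0 v).

Definition cex_alpha : VHom (prodVG Y Y) cex_P :=
  pairH (fstH Y Y) (compH cex_section (sndH Y Y)).

Definition cex_kernel_lift : VHom Y cex_M :=
  refine_liftH v cex_countP (fstH Y cex_Z) cex_kernel (vdist_le_dist_conj_sums0 v).

Definition cex_t_lift : VHom cex_Z cex_M :=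
  refine_liftH v cex_countP (fstH Y cex_Z) cex_t (refine_vdist_le v _ _).

Definition cex_alpha_lift : VHom (prodVG Y Y) cex_M :=
  refine_liftH v cex_countP (fstH Y cex_Z) cex_alpha
    (fun a a' => fmeet_le_l _ _ _ (vdist_le_dist_conj_sums0 v _ _)).

Lemma strongly_unital_vnorm_opp : strongly_unital_object Y -> vnorm v ⊑ vnorm (⊖ v).
Proof.
  intros H. apply cex_iso_vnorm_opp.
  apply (H _ _ _ (prodVG_is_product Y Y) (pairH (idH Y) (idH Y)) (fun _ => eq_refl)
           (fun _ => eq_refl) cex_Z cex_g cex_P cex_p1 (sndH Y cex_Z) cex_pullback cex_t
           (fun _ => eq_refl) (fun _ => eq_refl) Y cex_kernel cex_kernel_is_kernel
           cex_M cex_m (refine_idH_mono v _ _)).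
  - now exists cex_kernel_lift.
  - now exists cex_t_lift.
Qed.

Lemma maltsev_vnorm_opp : maltsev_object Y -> vnorm v ⊑ vnorm (⊖ v).
Proof.
  intros H. apply cex_iso_vnorm_opp.
  apply (H _ (sndH Y Y) (pairH (idH Y) (idH Y)) cex_Z cex_g cex_section
           (fun _ => eq_refl) (fun _ => eq_refl) cex_P cex_p1 (sndH Y cex_Z) cex_pullback
           cex_alpha cex_t); try (intros; reflexivity).
  - intros [a1 a2]. reflexivity.
  - apply refine_idH_mono.
  - now exists cex_alpha_lift.
  - now exists cex_t_lift.
Qed.

End Counterexample.

Theorem theorem6p5 (V : frame) (Y : VGroup V) :
  (protomodular_object Y <-> maltsev_object Y) /\
  (maltsev_object Y <-> strongly_unital_object Y) /\
  (strongly_unital_object Y <-> symmetric_VCat Y) /\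
  (symmetric_VCat Y <-> internal_group_VCat Y).
Proof.
  assert (su_sym : strongly_unital_object Y -> symmetric_VCat Y).
  { intros H. apply symmetric_of_vnorm_opp. intros v. exact (strongly_unital_vnorm_opp v H). }
  assert (mal_sym : maltsev_object Y -> symmetric_VCat Y).
  { intros H. apply symmetric_of_vnorm_opp. intros v. exact (maltsev_vnorm_opp v H). }
  pose proof (@symmetric_protomodular V Y) as sym_proto.
  pose proof (@symmetric_maltsev V Y) as sym_mal.
  pose proof (@protomodular_strongly_unital V Y) as proto_su.
  pose proof (@symmetric_iff_internal_group V Y).
  tauto.
Qed.
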